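(* Let $r\ge 1$ and let $f:\{0,1\}^r\to\{0,1\}$ be any Boolean function. Then $f$ can be performed deterministically in non-adaptive measurement-based quantum computing (nMBQC) using at most $n=2^r-1$ parties; that is, for some $n\le 2^r-1$ there exist an $n\times r$ binary matrix $P$ with no all-zero row, an $n$-partite quantum state and, for each party, a pair of two-outcome measurements, such that for every $\mathbf{x}\in\{0,1\}^r$ the outcomes satisfy $\bigoplus_{j=1}^n m_j=f(\mathbf{x})$ with probability $1$.
   Context: nMBQC: $n$ non-communicating parties share a quantum state $\rho$ on $\mathcal{H}_1\otimes\cdots\otimes\mathcal{H}_n$. A classical control computer receives $\mathbf{x}\in\{0,1\}^r$ and, using only XOR (mod-2 addition) operations, computes $\mathbf{s}=(P\mathbf{x})\bmod 2$ for a fixed $n\times r$ binary matrix $P$ with no all-zero row, sending $s_j\in\{0,1\}$ to party $j$. Party $j$ performs one of two two-outcome measurements (POVMs $\{E^{(j)}_{0|s_j},E^{(j)}_{1|s_j}\}$) chosen by $s_j$, in a single round, obtaining $m_j\in\{0,1\}$ with joint probability $\mathrm{Tr}[\rho\bigotimes_j E^{(j)}_{m_j|s_j}]$. The control computer outputs $\bigoplus_j m_j$ (sum mod 2). A Boolean function $f$ is performed deterministically if for every $\mathbf{x}$ the output equals $f(\mathbf{x})$ with probability $1$. *)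

From HB Require Import structures.
From mathcomp Require Import all_boot all_order all_algebra.
From mathcomp Require Import complex.
From mathcomp Require Import Rstruct.
Set Implicit Arguments. Unset Strict Implicit. Unset Printing Implicit Defensive.
Import Order.TTheory GRing.Theory Num.Theory.
Local Open Scope ring_scope.

Definition C : numClosedFieldType := (Rdefinitions.R)[i].

(* Operators on a finite-dimensional Hilbert space with orthonormal basis
   indexed by a finite type T, given by their matrix entries A a b. *)
Definition op (T : finType) := T -> T -> C.

(* Positive semidefinite: <v, A v> >= 0 for all v (in a numClosedFieldType,
   [0 <= z] means z is real and nonnegative). *)
Definition psd (T : finType) (A : op T) : Prop :=
  forall v : T -> C, 0 <= \sum_(a : T) \sum_(b : T) (v a)^* * A a b * v b.

Definition density (T : finType) (rho : op T) : Prop :=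
  psd rho /\ \sum_(a : T) rho a a = 1.

Definition povm2 (T : finType) (E : bool -> op T) : Prop :=
  (forall m, psd (E m)) /\
  (forall a b : T, E false a b + E true a b = (a == b)%:R).

(* Basis index of the joint space H_1 (x) ... (x) H_n, dim H_j = d j. *)
Definition jidx (n : nat) (d : 'I_n -> nat) : finType :=
  {dffun forall j : 'I_n, 'I_(d j)}.

Definition tens (n : nat) (d : 'I_n -> nat) (E : forall j : 'I_n, op 'I_(d j))
  : op (jidx d) :=
  fun a b => \prod_(j < n) E j (a j) (b j).

Definition trmul (T : finType) (rho X : op T) : C :=
  \sum_(a : T) \sum_(b : T) rho a b * X b a.

Definition xorsum (k : nat) (b : 'I_k -> bool) : bool :=
  \big[addb/false]_(i < k) b i.

Definition ctrl (n r : nat) (P : 'I_n -> 'I_r -> bool) (x : 'I_r -> bool)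
  : 'I_n -> bool :=
  fun j => xorsum (fun k => P j k && x k).

Definition jprob (n : nat) (d : 'I_n -> nat) (rho : op (jidx d))
  (E : forall j : 'I_n, bool -> bool -> op 'I_(d j))
  (s m : 'I_n -> bool) : C :=
  trmul rho (tens (fun j => E j (s j) (m j))).

Definition performs_det (r n : nat) (f : ('I_r -> bool) -> bool)
  (P : 'I_n -> 'I_r -> bool) (d : 'I_n -> nat) (rho : op (jidx d))
  (E : forall j : 'I_n, bool -> bool -> op 'I_(d j)) : Prop :=
  forall x : {ffun 'I_r -> bool},
    \sum_(m : {ffun 'I_n -> bool} | xorsum m == f x)
       jprob rho E (ctrl P x) m = 1.

From mathcomp Require Import all_boot all_order all_algebra.
From mathcomp Require Import ring complex Rstruct.

(* Index the parties by the nonzero vectors S of F_2^r and let N(S) be the Walsh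
   transform of f.  Fourier inversion gives
     sum_S (x.S) N(S) = 2^(r-1) (f(0) - f(x)).
   The parties share the GHZ state |0...0> + (-1)^f(0) |1...1>, and party S, on control
   bit s = x.S, measures in the basis |0> +- w |1> with w = om^(s N(S)), om a primitive
   2^r-th root of unity.  For such measurements on a GHZ state only the outcomes m with
   (-1)^(xor m) = (-1)^f(0) * prod_S w_S occur, and this product of phases is
   om^(2^(r-1) (f(0) - f(x))) = (-1)^(f(0) + f(x)). *)

Set Implicit Arguments. Unset Strict Implicit. Unset Printing Implicit Defensive.
Import Order.TTheory GRing.Theory Num.Theory.
Local Open Scope ring_scope.

Lemma sign_xorsum (R : comPzRingType) (k : nat) (b : 'I_k -> bool) :
  (-1) ^+ xorsum b = \prod_i (-1) ^+ b i :> R.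
Proof.
apply: (big_morph (fun c : bool => (-1) ^+ c : R)) => // x y.
exact: signr_addb.
Qed.

Lemma sum_ffun_bool_prod (R : comPzRingType) (I : finType) (F : I -> bool -> R) :
  \sum_(m : {ffun I -> bool}) \prod_i F i (m i) = \prod_i (F i false + F i true).
Proof.
rewrite -bigA_distr_bigA; apply: eq_bigr => i _.
by rewrite big_bool addrC.
Qed.

Lemma dffun_neqP (I : finType) (T : I -> eqType) (f g : {dffun forall i, T i}) :
  f != g -> exists i, f i != g i.
Proof.
move/eqP=> neq_fg; apply/existsP; apply: contra_notT neq_fg => /existsPn eq_fg.
by apply/ffunP => i; apply/eqP/negPn/eq_fg.
Qed.

Lemma signr_int_subb (R : unitRingType) (b0 b1 : bool) :
  (-1) ^ (b0%:R - b1%:R : int) = (-1) ^+ (b0 (+) b1) :> R.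
Proof.
by case: b0; case: b1 => //=; rewrite exprN1 invrN1.
Qed.

Lemma prodr_exprz (R : fieldType) (I : finType) (x : R) (e : I -> int) :
  x != 0 -> \prod_i x ^ e i = x ^ (\sum_i e i).
Proof.
move=> x_neq0; apply: esym; apply: (big_morph (fun k : int => x ^ k)) => // k l.
exact: expfzDr.
Qed.

Definition dotb (r : nat) (x S : 'I_r -> bool) : bool :=
  xorsum (fun k => S k && x k).

Lemma dotb0l (r : nat) (S : 'I_r -> bool) : dotb [ffun => false] S = false.
Proof. by rewrite /dotb /xorsum big1 // => k _; rewrite ffunE andbF. Qed.

Lemma dotb0r (r : nat) (x : 'I_r -> bool) : dotb x [ffun => false] = false.
Proof. by rewrite /dotb /xorsum big1 // => k _; rewrite ffunE. Qed.

Lemma sum_sign_dotb (R : comPzRingType) (r : nat) (x y : {ffun 'I_r -> bool}) :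
  \sum_(S : {ffun 'I_r -> bool}) (-1) ^+ dotb x S * (-1) ^+ dotb y S
    = (x == y)%:R * 2 ^+ r :> R.
Proof.
under eq_bigr => S _ do rewrite /dotb !sign_xorsum -big_split /=.
rewrite (sum_ffun_bool_prod (fun k c => (-1) ^+ (c && x k) * (-1) ^+ (c && y k))) /=.
have [<-|/dffun_neqP [k neq_k]] := eqVneq x y.
  under eq_bigr => k _ do rewrite -signr_addb addbb.
  by rewrite prodr_const card_ord !expr0 mulr1 -mulr2n /= mul1r.
rewrite (bigD1 k) //= -signr_addb mul0r.
by case: (x k) (y k) neq_k => [] [] //= _; rewrite mul1r expr1 subrr mul0r.
Qed.

Definition walsh (r : nat) (f : ('I_r -> bool) -> bool) (S : 'I_r -> bool) : int :=
  \sum_(y : {ffun 'I_r -> bool}) (f y)%:R * (-1) ^+ dotb y S.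

Lemma walsh_inversion (r : nat) (f : ('I_r -> bool) -> bool) (z : {ffun 'I_r -> bool}) :
  \sum_(S : {ffun 'I_r -> bool}) (-1) ^+ dotb z S * walsh f S = 2 ^+ r * (f z)%:R.
Proof.
under eq_bigr => S _ do rewrite /walsh mulr_sumr (eq_bigr _ (fun y _ => mulrCA _ _ _)).
rewrite exchange_big /=.
under eq_bigr => y _ do rewrite -mulr_sumr sum_sign_dotb.
rewrite (bigD1 z) //= big1 => [|y neq_yz]; last by rewrite eq_sym (negbTE neq_yz) !mul0r mulr0.
by rewrite eqxx mul1r addr0 mulrC.
Qed.

Lemma walsh_parity (r : nat) (f : ('I_r -> bool) -> bool) (x : {ffun 'I_r -> bool}) :
  (0 < r)%N ->
  \sum_(S : {ffun 'I_r -> bool}) (dotb x S)%:R * walsh f S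
    = 2 ^+ r.-1 * ((f [ffun => false])%:R - (f x)%:R).
Proof.
move=> r_gt0; apply: (@mulfI _ 2) => //.
(* [2 [b] = 1 - (-1)^b] turns the left-hand side into two Walsh inversions. *)
have twice_bit (b : bool) : 2 * b%:R = 1 - (-1) ^+ b :> int by case: b.
rewrite mulr_sumr.
under eq_bigr => S _ do rewrite mulrA twice_bit mulrBl mul1r.
have sum_walsh : \sum_(S : {ffun 'I_r -> bool}) walsh f S = 2 ^+ r * (f [ffun => false])%:R.
  by rewrite -walsh_inversion; apply: eq_bigr => S _; rewrite dotb0l mul1r.
by rewrite sumrB sum_walsh walsh_inversion mulrA -exprS prednK // mulrBr.
Qed.

Definition omega (r : nat) : C := (2 ^ r.-1)%N.-root (-1).

Lemma omega_exp_half (r : nat) : omega r ^+ (2 ^ r.-1)%N = -1.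
Proof. by rewrite /omega rootCK // expn_gt0. Qed.

Lemma norm_omega (r : nat) : `|omega r| = 1.
Proof. by rewrite /omega norm_rootC normrN normr1 rootC1 // expn_gt0. Qed.

Lemma norm_omega_exprz (r : nat) (k : int) : `|omega r ^ k| = 1.
Proof.
by case: k => k; rewrite ?normfV normrX norm_omega expr1n ?invr1.
Qed.

Definition rank1 (T : finType) (c : C) (u : T -> C) : op T :=
  fun a b => c * u a * (u b)^*.

Lemma psd_rank1 (T : finType) (c : C) (u : T -> C) : 0 <= c -> psd (rank1 c u).
Proof.
move=> c_ge0 v; set W := \sum_b (u b)^* * v b.
have -> : \sum_a \sum_b (v a)^* * rank1 c u a b * v b = c * (W^* * W).
  rewrite /W rmorph_sum mulr_suml mulr_sumr; apply: eq_bigr => a _.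
  rewrite !mulr_sumr; apply: eq_bigr => b _.
  by rewrite /rank1 rmorphM /= conjCK; ring.
by rewrite mulr_ge0 // mulrC mul_conjC_ge0.
Qed.

Lemma trmul_rank1 (T : finType) (c c' : C) (u w : T -> C) :
  let V := \sum_a (u a)^* * w a in
  trmul (rank1 c u) (rank1 c' w) = c * c' * V^* * V.
Proof.
rewrite /= rmorph_sum -mulrA mulr_suml mulr_sumr; apply: eq_bigr => a _.
rewrite mulrA mulr_sumr; apply: eq_bigr => b _.
by rewrite /rank1 rmorphM /= conjCK; ring.
Qed.

Lemma tens_rank1 (n : nat) (d : 'I_n -> nat) (c : 'I_n -> C)
    (u : forall j : 'I_n, 'I_(d j) -> C) (a b : jidx d) :
  tens (fun j => rank1 (c j) (u j)) a b
    = rank1 (\prod_j c j) (fun a : jidx d => \prod_j u j (a j)) a b.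
Proof. by rewrite /tens /rank1 !big_split /= rmorph_prod. Qed.

Lemma sum_tens_povm2 (n : nat) (d : 'I_n -> nat) (E : forall j : 'I_n, bool -> op 'I_(d j))
    (a b : jidx d) :
  (forall j, povm2 (E j)) ->
  \sum_(m : {ffun 'I_n -> bool}) tens (fun j => E j (m j)) a b = (a == b)%:R.
Proof.
move=> povmE; rewrite /tens (sum_ffun_bool_prod (fun j c => E j c (a j) (b j))).
under eq_bigr => j _ do rewrite (povmE j).2.
have [<-|/dffun_neqP [j neq_j]] := eqVneq a b.
  by rewrite big1 // => j _; rewrite eqxx.
by rewrite (bigD1 j) //= (negbTE neq_j) mul0r.
Qed.

Lemma sum_jprob (n : nat) (d : 'I_n -> nat) (rho : op (jidx d))
    (E : forall j : 'I_n, bool -> bool -> op 'I_(d j)) (s : 'I_n -> bool) :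
  density rho -> (forall j t, povm2 (E j t)) ->
  \sum_(m : {ffun 'I_n -> bool}) jprob rho E s m = 1.
Proof.
move=> [_ tr_rho] povmE; rewrite -tr_rho.
transitivity (\sum_a \sum_b rho a b * (b == a)%:R).
  rewrite exchange_big; apply: eq_bigr => a _; rewrite exchange_big; apply: eq_bigr => b _.
  by rewrite -mulr_sumr (sum_tens_povm2 _ _ (fun j => povmE j (s j))).
apply: eq_bigr => a _; rewrite (bigD1 a) //= eqxx mulr1 big1 ?addr0 // => b.
by rewrite eq_sym => /negbTE ->; rewrite mulr0.
Qed.

Lemma performs_det_of_parity (r n : nat) (f : ('I_r -> bool) -> bool)
    (P : 'I_n -> 'I_r -> bool) (d : 'I_n -> nat) (rho : op (jidx d))
    (E : forall j : 'I_n, bool -> bool -> op 'I_(d j)) :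
  density rho -> (forall j s, povm2 (E j s)) ->
  (forall (x : {ffun 'I_r -> bool}) (m : {ffun 'I_n -> bool}),
     xorsum m != f x -> jprob rho E (ctrl P x) m = 0) ->
  performs_det f P rho E.
Proof.
move=> rho_dens povmE jprob0 x.
rewrite -(sum_jprob (ctrl P x) rho_dens povmE).
rewrite [in RHS](bigID (fun m : {ffun _} => xorsum m == f x)) /=.
by rewrite [X in _ = _ + X]big1 ?addr0 // => m; exact: jprob0.
Qed.

Definition phase_vec (w : C) (m : bool) (p : 'I_2) : C :=
  if p == ord0 then 1 else (-1) ^+ m * w.

Definition phase_meas (w : C) (m : bool) : op 'I_2 := rank1 2^-1 (phase_vec w m).

Lemma povm2_phase_meas (w : C) : `|w| = 1 -> povm2 (phase_meas w).
Proof.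
move=> norm_w; split=> [m|p q]; first by apply: psd_rank1; rewrite invr_ge0 ler0n.
have w_unit : w * w^* = 1 by rewrite -normCK norm_w expr1n.
rewrite /phase_meas /rank1 /phase_vec.
case: (unliftP ord0 p) => [p' ->|->]; case: (unliftP ord0 q) => [q' ->|->];
  rewrite ?ord1 /= ?rmorphM ?rmorph_sign ?conjC1 /=.
- by rewrite -[RHS]w_unit; field.
- by ring.
- by ring.
- by field.
Qed.

Section GHZ.

Variable n : nat.

Definition qubit (j : 'I_n) : nat := 2.

Definition ket0 : jidx qubit := [ffun => ord0].
Definition ket1 : jidx qubit := [ffun => ord_max].

Definition ghz_vec (b : bool) (a : jidx qubit) : C :=
  (a == ket0)%:R + (-1) ^+ b * (a == ket1)%:R.

Definition ghz (b : bool) : op (jidx qubit) := rank1 2^-1 (ghz_vec b).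

Hypothesis n_gt0 : (0 < n)%N.

Lemma ket0_neq_ket1 : ket0 != ket1.
Proof. by apply/eqP => /ffunP /(_ (Ordinal n_gt0)); rewrite !ffunE. Qed.

Lemma sum_conj_ghz_vec (b : bool) (F : jidx qubit -> C) :
  \sum_a (ghz_vec b a)^* * F a = F ket0 + (-1) ^+ b * F ket1.
Proof.
under eq_bigr => a _ do rewrite rmorphD rmorphM /= rmorph_sign !rmorph_nat mulrDl -mulrA.
rewrite big_split /= -mulr_sumr.
have pick (c : jidx qubit) : \sum_a (a == c)%:R * F a = F c.
  by rewrite (bigD1 c) //= eqxx mul1r big1 ?addr0 // => a /negbTE ->; rewrite mul0r.
by rewrite !pick.
Qed.

Lemma density_ghz (b : bool) : density (ghz b).
Proof.
split; first by apply: psd_rank1; rewrite invr_ge0 ler0n.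
under eq_bigr => a _ do rewrite /ghz /rank1 -mulrA [ghz_vec b a * _]mulrC.
rewrite -mulr_sumr sum_conj_ghz_vec /ghz_vec !eqxx (negbTE ket0_neq_ket1).
by rewrite eq_sym (negbTE ket0_neq_ket1) /= mulr0 addr0 add0r mulr1 -signr_addb addbb; field.
Qed.

Lemma jprob_ghz (b : bool) (z : 'I_n -> bool -> C) (s m : 'I_n -> bool) :
  let V := 1 + (-1) ^+ xorsum m * ((-1) ^+ b * \prod_j z j (s j)) in
  jprob (ghz b) (fun j t => phase_meas (z j t)) s m = 2^-1 ^+ n.+1 * V^* * V.
Proof.
move=> V.
have -> : jprob (ghz b) (fun j t => phase_meas (z j t)) s m
    = trmul (ghz b) (rank1 (\prod_(j < n) 2^-1)
                           (fun a : jidx qubit => \prod_j phase_vec (z j (s j)) (m j) (a j))).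
  by apply: eq_bigr => a _; apply: eq_bigr => c _; rewrite tens_rank1.
rewrite trmul_rank1 sum_conj_ghz_vec prodr_const card_ord -exprS.
suff -> : \prod_j phase_vec (z j (s j)) (m j) (ket0 j)
            + (-1) ^+ b * \prod_j phase_vec (z j (s j)) (m j) (ket1 j) = V by [].
rewrite big1 => [|j _]; last by rewrite ffunE.
under eq_bigr => j _ do rewrite ffunE.
by rewrite big_split /= -sign_xorsum mulrCA.
Qed.

Lemma jprob_ghz_eq0 (b c : bool) (z : 'I_n -> bool -> C) (s m : 'I_n -> bool) :
  (-1) ^+ b * \prod_j z j (s j) = (-1) ^+ c -> xorsum m != c ->
  jprob (ghz b) (fun j t => phase_meas (z j t)) s m = 0.
Proof.
move=> phase_z; rewrite jprob_ghz phase_z -signr_addb {phase_z}.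
by case: (xorsum m) c => [] [] //= _; rewrite addrN mulr0.
Qed.

End GHZ.

Definition nonzero_vectors (r : nat) : {set {ffun 'I_r -> bool}} := [set~ [ffun => false]].

Lemma card_nonzero_vectors (r : nat) : #|nonzero_vectors r| = (2 ^ r).-1.
Proof. by rewrite cardsC1 card_ffun card_bool card_ord. Qed.

Lemma nonzero_vector_witness (r : nat) (S : {ffun 'I_r -> bool}) :
  S \in nonzero_vectors r -> exists k, S k.
Proof.
by rewrite !inE => /dffun_neqP [k]; rewrite ffunE eqbF_neg negbK; exists k.
Qed.

Lemma prod_omega_walsh (r : nat) (f : ('I_r -> bool) -> bool) (x : {ffun 'I_r -> bool}) :
  (0 < r)%N ->
  let S (j : 'I_#|nonzero_vectors r|) : 'I_r -> bool := enum_val j in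
  \prod_j omega r ^ ((dotb x (S j))%:R * walsh f (S j))
    = (-1) ^+ (f [ffun => false] (+) f x).
Proof.
move=> r_gt0 S; rewrite prodr_exprz; last by rewrite -normr_eq0 norm_omega oner_eq0.
rewrite -(big_enum_val (fun y : {ffun 'I_r -> bool} => (dotb x y)%:R * walsh f y)) /=.
have -> : \sum_(y in nonzero_vectors r) (dotb x y)%:R * walsh f y
          = \sum_(y : {ffun 'I_r -> bool}) (dotb x y)%:R * walsh f y.
  rewrite [RHS](bigD1 [ffun => false]) //= dotb0r mul0r add0r.
  by apply: eq_bigl => y; rewrite !inE.
rewrite walsh_parity //.
have -> : 2 ^+ r.-1 = (2 ^ r.-1)%N%:Z :> int by rewrite -natz natrX.
by rewrite -exprz_exp -exprnP omega_exp_half signr_int_subb.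
Qed.

Theorem theorem3p4p1 (r : nat) (hr : (1 <= r)%N) (f : ('I_r -> bool) -> bool) :
  exists (n : nat) (P : 'I_n -> 'I_r -> bool) (d : 'I_n -> nat)
         (rho : op (jidx d)) (E : forall j : 'I_n, bool -> bool -> op 'I_(d j)),
    [/\ (n <= 2 ^ r - 1)%N,
        (forall j : 'I_n, exists k : 'I_r, P j k),
        density rho,
        (forall (j : 'I_n) (s : bool), povm2 (E j s)) &
        performs_det f P rho E].
Proof.
pose n := #|nonzero_vectors r|.
pose P (j : 'I_n) : 'I_r -> bool := enum_val j.
pose z (j : 'I_n) (t : bool) := omega r ^ (t%:R * walsh f (P j)).
pose E (j : 'I_n) (t : bool) := phase_meas (z j t).
have n_gt0 : (0 < n)%N.
  by rewrite /n card_nonzero_vectors -subn1 subn_gt0 -{1}(expn0 2) ltn_exp2l.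
have rho_dens := density_ghz n_gt0 (f [ffun => false]).
have povmE (j : 'I_n) (t : bool) : povm2 (E j t).
  exact/povm2_phase_meas/norm_omega_exprz.
exists n, P, (@qubit n), (ghz (f [ffun => false])), E; split => //.
- by rewrite /n card_nonzero_vectors subn1.
- by move=> j; apply: nonzero_vector_witness; apply: enum_valP.
apply: performs_det_of_parity => // x m; apply: jprob_ghz_eq0.
by rewrite (prod_omega_walsh f x hr) -signr_addb addbA addbb.
Qed.
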